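(* Let $d\in\mathbb{N}$. Then $$\Pi=\bigcap_{\psi\in\mathcal{D}'}W(\psi),$$ where $\mathcal{D}'\subset\mathcal{D}$ consists of those functions in $\mathcal{D}$ all of whose values are reciprocals of natural numbers.
   Context: For $z\in\mathbb{R}^d$, $\|z\|$ denotes the sup-norm distance from $z$ to $\mathbb{Z}^d$. Write $\mathbb{N}=\{1,2,\dots\}$. For $\psi:\mathbb{N}\to\mathbb{R}_{\ge 0}$, let $W(\psi)$ be the set of pairs $(x,y)\in\mathbb{R}^d\times\mathbb{R}^d$ for which $\|nx+y\|<\psi(n)$ holds for infinitely many $n\in\mathbb{N}$. $\mathcal{D}$ is the set of all non-increasing $\psi:\mathbb{N}\to\mathbb{R}_{\ge0}$ with $\sum_n\psi(n)^d=\infty$, and $\Pi=\bigcap_{\psi\in\mathcal{D}}W(\psi)$. *)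

From HB Require Import structures.
From mathcomp Require Import all_boot all_order all_algebra.
From mathcomp Require Import all_classical all_reals all_analysis.
Set Implicit Arguments. Unset Strict Implicit. Unset Printing Implicit Defensive.
Import Order.TTheory GRing.Theory Num.Theory.
Local Open Scope classical_set_scope.
Local Open Scope ring_scope.

Definition zdist {R : realType} {d : nat} (z : 'I_d -> R) : R :=
  inf [set r : R | exists k : 'I_d -> int,
        r = \big[Num.max/0]_(i < d) `|z i - (k i)%:~R|].

(* psi : nat -> R; only the values at n >= 1 matter (domain N = {1,2,...}). *)
#[local] Unset Implicit Arguments.
Definition W {R : realType} (d : nat) (psi : nat -> R) : set (('I_d -> R) * ('I_d -> R)) :=
  [set p | forall N : nat, exists n : nat, (N < n)%N /\ (0 < n)%N /\
      zdist (fun i => n%:R * p.1 i + p.2 i) < psi n].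

#[local] Set Implicit Arguments.
Definition inD {R : realType} (d : nat) (psi : nat -> R) : Prop :=
  (forall n : nat, (0 < n)%N -> 0 <= psi n) /\
  (forall n m : nat, (0 < n)%N -> (n <= m)%N -> psi m <= psi n) /\
  (series (fun n : nat => psi n.+1 ^+ d) @ \oo --> +oo).

Definition inD' {R : realType} (d : nat) (psi : nat -> R) : Prop :=
  inD d psi /\
  (forall n : nat, (0 < n)%N -> exists m : nat, (0 < m)%N /\ psi n = (m%:R)^-1).

Definition Pi (R : realType) (d : nat) : set (('I_d -> R) * ('I_d -> R)) :=
  [set p | forall psi : nat -> R, inD d psi -> W d psi p].
Arguments Pi R d _ : clear implicits.

(* A function psi in D is positive on N (a zero value would make the series of
   psi(n)^d eventually constant), so rounding each value psi n down to
   the largest reciprocal 1/m strictly below it yields a function psi' in D'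
   with psi n / (1 + psi 1) <= psi' n <= psi n: it stays non-increasing, and
   comparison with a constant multiple of psi keeps sum psi'(n)^d divergent.
   Hence every (x, y) in the intersection over D' lies in W(psi') ⊆ W(psi). *)

From HB Require Import structures.
From mathcomp Require Import all_boot all_order all_algebra.
From mathcomp Require Import all_classical all_reals all_analysis.

Set Implicit Arguments.
Unset Strict Implicit.
Unset Printing Implicit Defensive.
Import Order.TTheory GRing.Theory Num.Theory.
Local Open Scope classical_set_scope.
Local Open Scope ring_scope.

Lemma series_eq_from (V : zmodType) (u : V ^nat) (N n : nat) :
  (forall k, (N <= k)%N -> u k = 0) -> (N <= n)%N -> series u n = series u N.
Proof.
move=> u0 Nn; rewrite /series /= (big_cat_nat (leq0n N) Nn) /=.
rewrite [X in _ + X]big_nat_cond [X in _ + X]big1 ?addr0 //.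
by move=> k /andP[/andP[Nk _] _]; exact: u0.
Qed.

Lemma ler_series_cvgry (R : realFieldType) (u v : R ^nat) (c : R) :
  0 < c -> (forall n, c * u n <= v n) ->
  series u @ \oo --> +oo -> series v @ \oo --> +oo.
Proof.
move=> c_gt0 uv /cvgryPge u_oo; apply/cvgryPge => A.
apply: filterS (u_oo (A / c)) => n; rewrite ler_pdivrMr // mulrC => /le_trans; apply.
by rewrite /series /= mulr_sumr; apply: ler_sum => k _.
Qed.

Section RecipBelow.
Variable R : archiRealFieldType.
Implicit Types x y : R.

Definition recip_below x : R := ((Num.truncn x^-1).+1)%:R^-1.

Lemma recip_below_ge0 x : 0 <= recip_below x.
Proof. by rewrite invr_ge0 ler0n. Qed.

Lemma recip_below_le x : 0 < x -> recip_below x <= x.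
Proof.
move=> x_gt0; rewrite -[leRHS]invrK lef_pV2 ?posrE ?invr_gt0 ?ltr0n //.
have xV_ge0 : 0 <= x^-1 by rewrite invr_ge0 ltW.
by case/andP: (truncn_itv xV_ge0) => _ /ltW.
Qed.

Lemma recip_below_ge x : 0 <= x -> x / (1 + x) <= recip_below x.
Proof.
rewrite le0r => /orP[/eqP-> | x_gt0]; first by rewrite mul0r recip_below_ge0.
rewrite ler_pdivrMr ?addr_gt0 // mulrC ler_pdivlMr ?ltr0n //.
have xV_ge0 : 0 <= x^-1 by rewrite invr_ge0 ltW.
have T_le : (Num.truncn x^-1).+1%:R <= x^-1 + 1.
  by rewrite -addn1 natrD lerD2r; case/andP: (truncn_itv xV_ge0).
apply: le_trans (ler_wpM2l (ltW x_gt0) T_le) _.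
by rewrite mulrDr mulfV ?gt_eqF // mulr1 addrC.
Qed.

Lemma recip_below_le_homo x y : 0 < x -> x <= y -> recip_below x <= recip_below y.
Proof.
move=> x_gt0 xy; rewrite lef_pV2 ?posrE ?ltr0n // ler_nat ltnS.
by apply: le_truncn; rewrite lef_pV2 ?posrE // (lt_le_trans x_gt0 xy).
Qed.

End RecipBelow.

Lemma W_le (R : realType) (d : nat) (phi psi : nat -> R) :
  (forall n, (0 < n)%N -> phi n <= psi n) -> W d phi `<=` W d psi.
Proof.
move=> phi_le p Wp N; have [n [Nn [n_gt0 near_p]]] := Wp N.
by exists n; split => //; split => //; apply: lt_le_trans near_p (phi_le n n_gt0).
Qed.

Section ClassD.
Variables (R : realType) (d : nat).
Hypothesis d_gt0 : (0 < d)%N.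

Lemma inD_gt0 (psi : nat -> R) : inD d psi -> forall n, (0 < n)%N -> 0 < psi n.
Proof.
move=> [psi_ge0 [psi_le psi_oo]] n n_gt0.
rewrite lt_neqAle psi_ge0 // andbT; apply/eqP => /esym psin0.
have pow0 k : (n <= k)%N -> psi k.+1 ^+ d = 0.
  move=> nk; suff -> : psi k.+1 = 0 by rewrite expr0n gtn_eqF.
  apply/le_anti; rewrite psi_ge0 // andbT -psin0.
  exact: psi_le n_gt0 (leqW nk).
have /cvgryPgt/(_ (series (fun k => psi k.+1 ^+ d) n)) := psi_oo.
case=> N _ /(_ (maxn N n) (leq_maxl _ _)).
by rewrite (series_eq_from pow0 (leq_maxr _ _)) ltxx.
Qed.

Lemma inD'_recip_below (psi : nat -> R) :
  inD d psi -> inD' d (fun n => recip_below (psi n)).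
Proof.
move=> psiD; have psi_gt0 := inD_gt0 psiD; case: psiD => [psi_ge0 [psi_le psi_oo]].
pose c := (1 + psi 1%N)^-1.
have c_gt0 : 0 < c by rewrite invr_gt0 addr_gt0 ?psi_gt0.
have c_le n : c * psi n.+1 <= recip_below (psi n.+1).
  apply: le_trans _ (recip_below_ge (psi_ge0 _ (ltn0Sn n))); rewrite mulrC.
  by rewrite ler_wpM2l ?psi_ge0 // lef_pV2 ?posrE ?addr_gt0 ?psi_gt0 // lerD2l psi_le.
split; last by move=> n _; exists (Num.truncn (psi n)^-1).+1.
split; first by move=> n _; exact: recip_below_ge0.
split.
  move=> n m n_gt0 nm; apply: recip_below_le_homo (psi_le _ _ n_gt0 nm).
  exact/psi_gt0/(leq_trans n_gt0 nm).
apply: (ler_series_cvgry (u := fun n => psi n.+1 ^+ d) (c := c ^+ d) _ _ psi_oo).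
  exact: exprn_gt0.
move=> n; rewrite -exprMn lerXn2r ?nnegrE ?recip_below_ge0 //.
by rewrite mulr_ge0 ?psi_ge0 ?ltW.
Qed.

End ClassD.

Theorem lemma8 (R : realType) (d : nat) (hd : (0 < d)%N) :
  Pi R d = [set p | forall psi : nat -> R, inD' d psi -> W d psi p].
Proof.
apply/seteqP; split => p Pi_p psi psiD; first exact: Pi_p _ psiD.1.
have Wp := Pi_p _ (inD'_recip_below hd psiD).
apply: (W_le _ Wp) => n n_gt0.
exact/recip_below_le/(inD_gt0 hd psiD n_gt0).
Qed.
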